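(* Let $d\ge 1$ and let $h:\mathbb{R}^d\to\mathbb{R}$ be a continuous, integrable ($\int_{\mathbb{R}^d}|h(\tau)|\,d\tau<\infty$), positive semi-definite function such that $h(\tau)>0$ for all $\tau\in\mathbb{R}^d$. Consider the family $\mathcal{K}_h$ of all functions of the form $$k_K(\tau)=\sum_{k=1}^{K}\alpha_k\, h(\tau\odot\gamma_k)\cos(2\pi\,\omega_k^T\tau),\qquad \tau\in\mathbb{R}^d,$$ where $K\in\mathbb{N}^*=\{1,2,\dots\}$, $\alpha_k\in\mathbb{R}$, $\omega_k\in[0,\infty)^d$ and $\gamma_k\in(0,\infty)^d$. Then $\mathcal{K}_h$ is dense in the set of stationary real-valued kernels on $\mathbb{R}^d$ with respect to pointwise convergence: for every continuous positive semi-definite function $k:\mathbb{R}^d\to\mathbb{R}$ there is a sequence $(k^{(n)})_{n\ge1}$ of elements of $\mathcal{K}_h$ with $k^{(n)}(\tau)\to k(\tau)$ for every $\tau\in\mathbb{R}^d$. *)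

From mathcomp Require Import all_boot.
From Stdlib Require Import Reals.
Open Scope R_scope.

Definition vec (d : nat) := 'I_d -> R.

Definition sumR (n : nat) (f : nat -> R) : R := \big[Rplus/0]_(0 <= i < n) f i.

Definition dot {d} (x y : vec d) : R := \big[Rplus/0]_(i < d) (x i * y i).
Definition vsub {d} (x y : vec d) : vec d := fun i => x i - y i.
Definition vopp {d} (x : vec d) : vec d := fun i => - x i.
Definition hadamard {d} (x y : vec d) : vec d := fun i => x i * y i.

(* continuity on R^d (sup-norm, which induces the usual topology) *)
Definition cont_Rd {d} (f : vec d -> R) : Prop :=
  forall x eps, 0 < eps -> exists delta, 0 < delta /\
    forall y, (forall i, Rabs (y i - x i) < delta) -> Rabs (f y - f x) < eps.

Definition psd_fun {d} (f : vec d -> R) : Prop :=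
  (forall x, f (vopp x) = f x) /\
  forall (n : nat) (xs : nat -> vec d) (c : nat -> R),
    0 <= sumR n (fun i => sumR n (fun j => c i * c j * f (vsub (xs i) (xs j)))).

(* Iterated Riemann integral over the cube [-r,r]^m of the first m
   coordinates of g : (nat -> R) -> R, the remaining coordinates being 0.
   box_int m r g I  means that this iterated integral exists and equals I. *)
Fixpoint box_int (m : nat) (r : R) (g : (nat -> R) -> R) (I : R) : Prop :=
  match m with
  | O => I = g (fun _ => 0)
  | S m' => exists G : R -> R,
      (forall x, box_int m' r
          (fun v => g (fun j => if Nat.eqb j m' then x else v j)) (G x)) /\
      exists pr : Riemann_integrable G (- r) r, RiemannInt pr = I
  end.

Definition of_nat_vec {d} (v : nat -> R) : vec d := fun i => v (nat_of_ord i).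

(* Lebesgue integrability of a continuous f on R^d: the integrals of |f|
   over the cubes [-r,r]^d are uniformly bounded. *)
Definition integrable_Rd {d} (f : vec d -> R) : Prop :=
  exists M, forall r, 0 < r -> exists I,
    box_int d r (fun v => Rabs (f (of_nat_vec v))) I /\ I <= M.

Definition in_K {d} (h : vec d -> R) (f : vec d -> R) : Prop :=
  exists (K : nat) (alpha : nat -> R) (omega gamma : nat -> vec d),
    (1 <= K)%nat /\
    (forall k i, 0 <= omega k i) /\ (forall k i, 0 < gamma k i) /\
    forall tau, f tau =
      sumR K (fun k => alpha k * h (hadamard tau (gamma k))
                        * cos (2 * PI * dot (omega k) tau)).

(* Since the weights [alpha_k] are arbitrary, K_h is a vector space, and it
   suffices to approximate k uniformly on every cube [-m, m]^d; a diagonal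
   sequence then converges pointwise. As h is continuous with h 0 > 0, the term
   h (c tau) cos (w . tau) / h 0 tends to cos (w . tau) uniformly on cubes when
   c -> 0. Second differences in the frequency w along e >= 0 then produce
   (e . tau)^2 cos (w . tau), and polarisation produces tau_i tau_j times any such
   function, so the even part of every polynomial is approximable. Finally, the
   even parts of multivariate Bernstein polynomials of k converge to k uniformly on
   cubes, because a positive semi-definite k is even. *)

From HB Require Import structures.
From mathcomp Require Import all_boot zify.
From Stdlib Require Import Reals Lra Lia FunctionalExtensionality Classical ClassicalEpsilon.
Open Scope R_scope.

HB.instance Definition _ := Monoid.isComLaw.Build R 0 Rplus
  (fun x y z => esym (Rplus_assoc x y z)) Rplus_comm Rplus_0_l.
HB.instance Definition _ := Monoid.isComLaw.Build R 1 Rmult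
  (fun x y z => esym (Rmult_assoc x y z)) Rmult_comm Rmult_1_l.
HB.instance Definition _ := Monoid.isMulLaw.Build R 0 Rmult Rmult_0_l Rmult_0_r.
HB.instance Definition _ :=
  Monoid.isAddLaw.Build R Rmult Rplus Rmult_plus_distr_r Rmult_plus_distr_l.

Lemma Rabs_le_bounds {x m} : Rabs x <= m -> - m <= x <= m.
Proof. by rewrite /Rabs; case: Rcase_abs; lra. Qed.

Section RealBigops.
Context {I : Type} {r : seq I} {P : pred I}.

Lemma Rabs_big_le (F : I -> R) :
  Rabs (\big[Rplus/0]_(i <- r | P i) F i) <= \big[Rplus/0]_(i <- r | P i) Rabs (F i).
Proof.
apply: (big_ind2 (fun x y => Rabs x <= y)) => [|x1 x2 y1 y2 H1 H2|i _ /=].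
- by rewrite Rabs_R0; lra.
- by apply: Rle_trans (Rabs_triang _ _) _; lra.
- lra.
Qed.

Lemma big_Rle (F G : I -> R) : (forall i, P i -> F i <= G i) ->
  \big[Rplus/0]_(i <- r | P i) F i <= \big[Rplus/0]_(i <- r | P i) G i.
Proof. by move=> H; apply: (big_ind2 Rle) => //; [lra|move=> *; lra]. Qed.

Lemma big_Rsum_ge0 (F : I -> R) : (forall i, P i -> 0 <= F i) ->
  0 <= \big[Rplus/0]_(i <- r | P i) F i.
Proof. by move=> H; apply: (big_ind (Rle 0)) => //; [lra|move=> *; lra]. Qed.

Lemma big_Rprod_ge0 (F : I -> R) : (forall i, P i -> 0 <= F i) ->
  0 <= \big[Rmult/1]_(i <- r | P i) F i.
Proof. by move=> H; apply: (big_ind (Rle 0)) => //; [lra|exact: Rmult_le_pos]. Qed.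

Lemma big_Rsum_sub (F G : I -> R) :
  \big[Rplus/0]_(i <- r | P i) (F i - G i)
  = \big[Rplus/0]_(i <- r | P i) F i - \big[Rplus/0]_(i <- r | P i) G i.
Proof.
by apply: (big_rec3 (fun a b c => a = b - c)) => [|i a b c _ ->]; ring.
Qed.

End RealBigops.

Lemma Rle_big_term {I : finType} (F : I -> R) j : (forall i, 0 <= F i) ->
  F j <= \big[Rplus/0]_(i : I) F i.
Proof.
move=> HF; rewrite (bigD1 j) //=.
suff : 0 <= \big[Rplus/0]_(i | i != j) F i by lra.
exact: big_Rsum_ge0.
Qed.

Lemma big_ord_Rconst n c : \big[Rplus/0]_(i < n) c = INR n * c.
Proof.
rewrite big_const_ord; elim: n => [|n IH] /=; first ring.
by rewrite IH; case: n {IH} => [|n] /=; ring.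
Qed.

Definition in_cube {d} (m : R) (t : vec d) := forall i, Rabs (t i) <= m.

Lemma sumR_scal n c f : sumR n (fun i => c * f i) = c * sumR n f.
Proof. by rewrite /sumR big_distrr. Qed.

Lemma sumR_cat K1 K2 f :
  sumR (K1 + K2) f = sumR K1 f + sumR K2 (fun i => f (i + K1)%nat).
Proof.
rewrite /sumR (big_cat_nat (leq0n K1) (leq_addr K2 K1)) /=; congr (_ + _).
by rewrite -{1}(add0n K1) big_addn addKn.
Qed.

Lemma sumR_ext n f g : (forall i, (i < n)%nat -> f i = g i) -> sumR n f = sumR n g.
Proof. by move=> H; apply: eq_big_nat => i /andP[_ Hi]; exact: H. Qed.

Lemma sumR1 f : sumR 1 f = f 0%nat.
Proof. by rewrite /sumR big_nat1. Qed.

Section Dot.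
Context {d : nat}.
Implicit Types (a b t : vec d).

Definition unit_vec (i : 'I_d) : vec d := fun l => if l == i then 1 else 0.

Lemma dot0 t : dot (fun _ => 0) t = 0.
Proof. by rewrite /dot big1 // => i _; ring. Qed.

Lemma dot_lin a b c t : dot (fun i => a i + c * b i) t = dot a t + c * dot b t.
Proof. by rewrite /dot big_distrr -big_split; apply: eq_bigr => i _ /=; ring. Qed.

Lemma dot_scal c a t : dot (fun i => c * a i) t = c * dot a t.
Proof. by rewrite /dot big_distrr; apply: eq_bigr => i _ /=; ring. Qed.

Lemma dot_unit_vec i t : dot (unit_vec i) t = t i.
Proof. by rewrite /dot (bigD1 i) //= /unit_vec eqxx big1 => [|l /negbTE ->]; ring. Qed.

Lemma unit_vec_ge0 i l : 0 <= unit_vec i l.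
Proof. by rewrite /unit_vec; case: ifP => _; lra. Qed.

Lemma Rabs_dot_le a t m : 0 <= m -> in_cube m t ->
  Rabs (dot a t) <= m * \big[Rplus/0]_(i < d) Rabs (a i).
Proof.
move=> Hm Ht; rewrite /dot big_distrr; apply: Rle_trans (Rabs_big_le _) _.
apply: big_Rle => i _ /=; rewrite Rabs_mult.
by have := Ht i; have := Rabs_pos (a i); nra.
Qed.

End Dot.

(** * Trigonometric estimates *)

Lemma Rabs_sin_le x : Rabs (sin x) <= Rabs x.
Proof.
wlog Hx : x / 0 <= x.
  move=> Hpos; case: (Rle_dec 0 x) => [|Hx]; first exact: Hpos.
  by rewrite -Rabs_Ropp -sin_neg -(Rabs_Ropp x); apply: Hpos; lra.
rewrite (Rabs_pos_eq x) //; have := SIN_bound x.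
case: (Rle_dec 1 x) => [|Hx1 Hsin]; first by move=> *; apply: Rabs_le; lra.
case: (Req_dec x 0) => [->|Hx0]; first by rewrite sin_0 Rabs_R0; lra.
have Hsin_pos : 0 < sin x by apply: sin_gt_0; have := PI2_1; lra.
rewrite Rabs_pos_eq; [have := sin_lt_x x|]; lra.
Qed.

Lemma Rabs_cos_sub_le x y : Rabs (cos x - cos y) <= Rabs (x - y).
Proof.
rewrite form2 !Rabs_mult Rabs_Ropp (Rabs_pos_eq 2); last lra.
have := Rabs_sin_le ((x - y) / 2); have := Rabs_pos (sin ((x - y) / 2)).
have : Rabs (sin ((x + y) / 2)) <= 1 by apply: Rabs_le; apply: SIN_bound.
rewrite /Rdiv Rabs_mult (Rabs_pos_eq (/ 2)); last lra.
have := Rabs_pos (x - y); nra.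
Qed.

Lemma one_sub_cos x : 1 - cos x = 2 * sin (x / 2) ^ 2.
Proof. rewrite {1}(_ : x = 2 * (x / 2)); last field. rewrite cos_2a_sin; ring. Qed.

Lemma Rabs_sub_sin_le x : Rabs (x - sin x) <= Rabs x ^ 3 / 2.
Proof.
have [c [Hc Hc_range]] := MVT_abs (fun x => x - sin x) (fun x => 1 - cos x) 0 x
  (fun c _ => derivable_pt_lim_minus _ _ _ _ _ (derivable_pt_lim_id c)
                (derivable_pt_lim_sin c)).
rewrite sin_0 !Rminus_0_r in Hc; rewrite Hc one_sub_cos.
have Hcx : Rabs c <= Rabs x.
  rewrite /Rmin /Rmax in Hc_range; case: (Rle_dec 0 x) Hc_range => ? ?;
  [rewrite (Rabs_pos_eq x) // Rabs_pos_eq|rewrite (Rabs_left x) ?Rabs_left1]; lra.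
have Hs := Rabs_sin_le (c / 2).
rewrite /Rdiv Rabs_mult (Rabs_pos_eq (/ 2)) in Hs; last lra.
rewrite Rabs_mult (Rabs_pos_eq 2); last lra.
have Hs2 : Rabs (sin (c * / 2)) ^ 2 <= (Rabs x * / 2) ^ 2.
  by apply: pow_incr; split; [exact: Rabs_pos|lra].
rewrite -RPow_abs; have := Rabs_pos x; rewrite /Rdiv; nra.
Qed.

Lemma Rabs_cos_taylor2 x : Rabs (1 - cos x - x ^ 2 / 2) <= Rabs x ^ 4 / 8.
Proof.
set s := sin (x / 2).
have -> : 1 - cos x - x ^ 2 / 2 = - 2 * ((x / 2 - s) * (x / 2 + s)).
  by rewrite one_sub_cos -/s; field.
have Hsub := Rabs_sub_sin_le (x / 2); rewrite -/s in Hsub.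
have Hs := Rabs_sin_le (x / 2); rewrite -/s in Hs.
have Hadd : Rabs (x / 2 + s) <= 2 * Rabs (x / 2) by apply: Rle_trans (Rabs_triang _ _) _; lra.
rewrite !Rabs_mult Rabs_Ropp (Rabs_pos_eq 2); last lra.
have -> : Rabs x ^ 4 / 8 = 2 * (Rabs (x / 2) ^ 3 / 2 * (2 * Rabs (x / 2))).
  by rewrite /Rdiv Rabs_mult (Rabs_pos_eq (/ 2)); [field|lra].
have := Rabs_pos (x / 2 - s); have := Rabs_pos (x / 2 + s); have := Rabs_pos (x / 2).
nra.
Qed.

Lemma cos_second_difference a u :
  Rabs (cos (a + 2 * u) - 2 * cos (a + u) + cos a + u ^ 2 * cos a)
  <= Rabs u ^ 3 + Rabs u ^ 4 / 4.
Proof.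
have -> : cos (a + 2 * u) - 2 * cos (a + u) + cos a + u ^ 2 * cos a
    = - 2 * cos (a + u) * (1 - cos u - u ^ 2 / 2) + u ^ 2 * (cos a - cos (a + u)).
  have Hsum : cos (a + 2 * u) + cos a = 2 * cos (a + u) * cos u.
    rewrite form1 (_ : (a + 2 * u - a) / 2 = u); last field.
    by rewrite (_ : (a + 2 * u + a) / 2 = a + u); [ring|field].
  lra.
have Hcos : Rabs (cos (a + u)) <= 1 by apply: Rabs_le; apply: COS_bound.
have Hlip := Rabs_cos_sub_le a (a + u).
rewrite (_ : a - (a + u) = - u) ?Rabs_Ropp in Hlip; last ring.
have Htaylor := Rabs_cos_taylor2 u.
have T1 : Rabs (- 2 * cos (a + u) * (1 - cos u - u ^ 2 / 2)) <= Rabs u ^ 4 / 4.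
  rewrite 2!Rabs_mult (Rabs_left (-2)); last lra.
  have := Rabs_pos (cos (a + u)); have := Rabs_pos (1 - cos u - u ^ 2 / 2); nra.
have T2 : Rabs (u ^ 2 * (cos a - cos (a + u))) <= Rabs u ^ 3.
  rewrite Rabs_mult -RPow_abs.
  have := pow2_ge_0 (Rabs u); have := Rabs_pos (cos a - cos (a + u)); nra.
have := Rabs_triang (- 2 * cos (a + u) * (1 - cos u - u ^ 2 / 2)) (u ^ 2 * (cos a - cos (a + u))).
lra.
Qed.

Lemma scaled_cos_second_difference p a v s : 0 < s ->
  Rabs (p * v ^ 2 * cos a
        - - / s ^ 2 * (p * cos (a + 2 * s * v) + -2 * (p * cos (a + s * v)) + p * cos a))
  <= Rabs p * s * (Rabs v ^ 3 + s * Rabs v ^ 4).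
Proof.
move=> Hs.
have -> : p * v ^ 2 * cos a
          - - / s ^ 2 * (p * cos (a + 2 * s * v) + -2 * (p * cos (a + s * v)) + p * cos a)
        = p / s ^ 2 * (cos (a + 2 * (s * v)) - 2 * cos (a + s * v) + cos a
                       + (s * v) ^ 2 * cos a).
  by rewrite (_ : 2 * (s * v) = 2 * s * v); [field; lra|ring].
have Hsv := cos_second_difference a (s * v).
rewrite Rabs_mult (Rabs_pos_eq s) in Hsv; last lra.
have Hp : Rabs (p / s ^ 2) = Rabs p / s ^ 2.
  by rewrite /Rdiv Rabs_mult Rabs_inv (Rabs_pos_eq (s ^ 2)) //; apply: pow2_ge_0.
rewrite Rabs_mult Hp.
apply: Rle_trans (Rmult_le_compat_l _ _ _ _ Hsv) _.
  by apply: Rmult_le_pos; [exact: Rabs_pos|apply: Rlt_le; apply: Rinv_0_lt_compat; nra].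
have := Rabs_pos p; have := Rabs_pos v; have := pow_le (Rabs v) 4 (Rabs_pos v).
have := pow_le (Rabs v) 3 (Rabs_pos v).
rewrite !Rpow_mult_distr /Rdiv; move=> *.
have -> : Rabs p * / s ^ 2 * (s ^ 3 * Rabs v ^ 3 + s ^ 4 * Rabs v ^ 4 * / 4)
        = Rabs p * s * (Rabs v ^ 3 + s * (Rabs v ^ 4 * / 4)) by field; lra.
apply: Rmult_le_compat_l; first nra.
apply: Rplus_le_compat_l; apply: Rmult_le_compat_l; lra.
Qed.

Lemma small_step {B X eps} : 0 <= B -> 0 <= X -> 0 < eps ->
  exists s, 0 < s /\ B * s * (X ^ 3 + s * X ^ 4) < eps.
Proof.
move=> HB HX Heps; set Y := (B + 1) * (X ^ 3 + X ^ 4 + 1).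
have X3 := pow_le X 3 HX; have X4 := pow_le X 4 HX.
have HY : 0 < Y by apply: Rmult_lt_0_compat; lra.
exists (Rmin 1 (eps / (2 * Y))).
have Hs0 : 0 < Rmin 1 (eps / (2 * Y)) by apply: Rmin_pos; [lra|apply: Rdiv_lt_0_compat; lra].
have Hs1 := Rmin_l 1 (eps / (2 * Y)); have Hs2 := Rmin_r 1 (eps / (2 * Y)).
set s := Rmin 1 (eps / (2 * Y)) in Hs0 Hs1 Hs2 *; split => //.
have HYs : Y * s <= eps / 2.
  apply: Rle_trans (Rmult_le_compat_l _ _ _ (Rlt_le _ _ HY) Hs2) _; right; field; lra.
have : B * s * (X ^ 3 + s * X ^ 4) <= Y * s.
  rewrite /Y; have : s * X ^ 4 <= X ^ 4 by nra.
  have : 0 <= B * s by nra.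
  nra.
lra.
Qed.

(** * Bernstein polynomials *)

Definition bernstein n j x := C n j * x ^ j * (1 - x) ^ (n - j).

Lemma C_ge0 n j : 0 <= C n j.
Proof.
apply: Rlt_le; apply: Rdiv_lt_0_compat; first exact: INR_fact_lt_0.
apply: Rmult_lt_0_compat; exact: INR_fact_lt_0.
Qed.

Lemma bernstein_ge0 n j x : 0 <= x <= 1 -> 0 <= bernstein n j x.
Proof.
move=> Hx; apply: Rmult_le_pos; [apply: Rmult_le_pos|]; try apply: pow_le; try lra.
exact: C_ge0.
Qed.

Lemma C_succ n j : INR j.+1 * C n.+1 j.+1 = INR n.+1 * C n j.
Proof.
rewrite /C (_ : (n.+1 - j.+1)%coq_nat = (n - j)%coq_nat) // !fact_simpl !mult_INR.
have := INR_fact_neq_0 j; have := INR_fact_neq_0 (n - j)%coq_nat.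
have : INR j.+1 <> 0 by apply: not_0_INR.
by move=> *; field.
Qed.

Lemma big_ord_sum_f_R0 (F : nat -> R) n : \big[Rplus/0]_(j < n.+1) F j = sum_f_R0 F n.
Proof.
elim: n => [|n IH]; first by rewrite big_ord_recr big_ord0 /=; ring.
by rewrite big_ord_recr /= IH.
Qed.

Lemma sum_f_R0_scal c F N : sum_f_R0 (fun i => c * F i) N = c * sum_f_R0 F N.
Proof. by rewrite scal_sum; apply: sum_eq => i _; ring. Qed.

Lemma sum_bernstein n x : sum_f_R0 (fun j => bernstein n j x) n = 1.
Proof.
have := binomial x (1 - x) n.
rewrite (_ : x + (1 - x) = 1); last ring.
by rewrite pow1 => ->; apply: sum_eq.
Qed.

Lemma sum_bernstein_moment1 n x : (1 <= n)%nat ->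
  sum_f_R0 (fun j => INR j * bernstein n j x) n = INR n * x.
Proof.
case: n => [//|n] _; rewrite decomp_sum; last lia.
change (INR 0) with 0; change (Nat.pred n.+1) with n; rewrite Rmult_0_l Rplus_0_l.
rewrite (sum_eq _ (fun i => bernstein n i x * (INR n.+1 * x))).
  by rewrite -scal_sum sum_bernstein; ring.
move=> i _; rewrite /bernstein (_ : (n.+1 - i.+1)%nat = (n - i)%nat) //.
change (x ^ i.+1) with (x * x ^ i).
rewrite (_ : INR i.+1 * (C n.+1 i.+1 * (x * x ^ i) * (1 - x) ^ (n - i))
   = INR i.+1 * C n.+1 i.+1 * (x * x ^ i) * (1 - x) ^ (n - i)); last ring.
by rewrite C_succ; ring.
Qed.

Lemma sum_bernstein_moment2 n x : (2 <= n)%nat ->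
  sum_f_R0 (fun j => INR j * (INR j - 1) * bernstein n j x) n
  = INR n * (INR n - 1) * x ^ 2.
Proof.
case: n => [//|[//|n]] _; rewrite decomp_sum; last lia.
change (INR 0) with 0; change (Nat.pred n.+2) with n.+1; rewrite !Rmult_0_l Rplus_0_l.
rewrite decomp_sum; last lia.
change (INR 1) with 1; change (Nat.pred n.+1) with n.
rewrite Rminus_diag Rmult_0_r Rmult_0_l Rplus_0_l.
rewrite (sum_eq _ (fun i => bernstein n i x * (INR n.+2 * INR n.+1 * x ^ 2))).
  by rewrite -scal_sum sum_bernstein !S_INR; ring.
move=> i _; rewrite /bernstein (_ : (n.+2 - i.+2)%nat = (n - i)%nat) //.
have -> : INR i.+2 * (INR i.+2 - 1) = INR i.+2 * INR i.+1 by rewrite (S_INR i.+1); ring.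
rewrite (_ : INR i.+2 * INR i.+1 * (C n.+2 i.+2 * x ^ i.+2 * (1 - x) ^ (n - i))
   = INR i.+1 * (INR i.+2 * C n.+2 i.+2) * x ^ i.+2 * (1 - x) ^ (n - i)); last ring.
rewrite C_succ (_ : INR i.+1 * (INR n.+2 * C n.+1 i.+1)
   = INR n.+2 * (INR i.+1 * C n.+1 i.+1)); last ring.
by rewrite C_succ /=; ring.
Qed.

Lemma sum_bernstein_variance n x : (2 <= n)%nat ->
  sum_f_R0 (fun j => (INR j / INR n - x) ^ 2 * bernstein n j x) n = x * (1 - x) / INR n.
Proof.
move=> Hn; have Hn0 : 0 < INR n by apply: lt_0_INR; apply/ltP; exact: ltnW.
rewrite (sum_eq _ (fun j => / INR n ^ 2 * (INR j * (INR j - 1) * bernstein n j x)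
     + ((/ INR n ^ 2 - 2 * x / INR n) * (INR j * bernstein n j x)
        + x ^ 2 * bernstein n j x))); last by move=> i _; field; lra.
rewrite !sum_plus !sum_f_R0_scal sum_bernstein_moment2 // sum_bernstein_moment1;
  last exact: ltnW.
by rewrite sum_bernstein; field; lra.
Qed.

Section BernsteinOperator.
Context {d : nat}.
Implicit Types (f : vec d -> R) (t x y : vec d).

Local Notation multi_index n := {ffun 'I_d -> 'I_n.+1}.

Lemma quadratic_modulus {f m M eps del} :
  0 < eps -> 0 < del -> (forall t, in_cube m t -> Rabs (f t) <= M) ->
  (forall x y, in_cube m x -> in_cube m y -> (forall i, Rabs (x i - y i) < del) ->
     Rabs (f x - f y) < eps) ->
  forall x y, in_cube m x -> in_cube m y ->
  Rabs (f x - f y) <= eps + 2 * M / del ^ 2 * \big[Rplus/0]_(l < d) (x l - y l) ^ 2.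
Proof.
move=> Heps Hdel HM Hu x y Hx Hy.
have Hc : 0 <= 2 * M / del ^ 2.
  have := HM x Hx; have := Rabs_pos (f x); have := pow_lt del 2 Hdel.
  by move=> *; apply: Rmult_le_pos; [lra|apply: Rlt_le; apply: Rinv_0_lt_compat].
have Hsq : 0 <= \big[Rplus/0]_(l < d) (x l - y l) ^ 2.
  by apply: big_Rsum_ge0 => l _; apply: pow2_ge_0.
case: (classic (forall l, Rabs (x l - y l) < del)) => [Hclose|/not_all_ex_not [l Hl]].
  by have := Hu x y Hx Hy Hclose; have := Rmult_le_pos _ _ Hc Hsq; lra.
have Hfar : del ^ 2 <= \big[Rplus/0]_(l < d) (x l - y l) ^ 2.
  have /= := @Rle_big_term _ (fun l => (x l - y l) ^ 2) l (fun i => pow2_ge_0 _).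
  suff : del ^ 2 <= (x l - y l) ^ 2 by lra.
  by rewrite -(pow2_abs (x l - y l)); apply: pow_incr; lra.
have : 2 * M <= 2 * M / del ^ 2 * \big[Rplus/0]_(l < d) (x l - y l) ^ 2.
  apply: Rle_trans (_ : 2 * M / del ^ 2 * del ^ 2 <= _); last exact: Rmult_le_compat_l.
  by right; field; lra.
have : Rabs (f x - f y) <= Rabs (f x) + Rabs (f y).
  by rewrite -(Rabs_Ropp (f y)); exact: Rabs_triang.
by have := HM x Hx; have := HM y Hy; lra.
Qed.

Definition to_unit m s := (s + m) / (2 * m).

Definition bgrid m n (k : multi_index n) : vec d :=
  fun i => - m + 2 * m * (INR (k i) / INR n).

Definition bweight m n (k : multi_index n) t :=
  \big[Rmult/1]_(i < d) bernstein n (k i) (to_unit m (t i)).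

Definition bernstein_op m n f t :=
  \big[Rplus/0]_(k : multi_index n) (f (bgrid m n k) * bweight m n k t).

Lemma to_unit_01 {m s} : 0 < m -> Rabs s <= m -> 0 <= to_unit m s <= 1.
Proof.
move=> Hm /Rabs_le_bounds Hs; rewrite /to_unit; split.
  by apply: Rmult_le_pos; [lra|apply: Rlt_le; apply: Rinv_0_lt_compat; lra].
by apply: (Rmult_le_reg_r (2 * m)); [lra|rewrite /Rdiv Rmult_assoc Rinv_l; lra].
Qed.

Lemma bgrid_in_cube m n k : 0 < m -> (1 <= n)%nat -> in_cube m (bgrid m n k).
Proof.
move=> Hm Hn i; rewrite /bgrid.
have Hk : INR (k i) <= INR n by apply: le_INR; apply/leP; rewrite -ltnS.
have Hn0 : 0 < INR n by apply: lt_0_INR; apply/ltP.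
have Hratio : 0 <= INR (k i) / INR n <= 1.
  split; first by apply: Rmult_le_pos; [exact: pos_INR|apply: Rlt_le; apply: Rinv_0_lt_compat].
  by apply: (Rmult_le_reg_r (INR n)) => //; rewrite /Rdiv Rmult_assoc Rinv_l; lra.
apply: Rabs_le; nra.
Qed.

Lemma bweight_ge0 m n k t : 0 < m -> in_cube m t -> 0 <= bweight m n k t.
Proof.
by move=> Hm Ht; apply: big_Rprod_ge0 => i _; apply: bernstein_ge0; apply: to_unit_01.
Qed.

Lemma sum_bweight m n t : \big[Rplus/0]_(k : multi_index n) bweight m n k t = 1.
Proof.
rewrite /bweight -(bigA_distr_bigA
  (fun i (j : 'I_n.+1) => bernstein n j (to_unit m (t i)))).
by apply: big1 => i _; rewrite -(sum_bernstein n (to_unit m (t i))) -big_ord_sum_f_R0.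
Qed.

Lemma sum_bweight_sq_dev m n t l : (2 <= n)%nat ->
  \big[Rplus/0]_(k : multi_index n)
     ((INR (k l) / INR n - to_unit m (t l)) ^ 2 * bweight m n k t)
  = to_unit m (t l) * (1 - to_unit m (t l)) / INR n.
Proof.
move=> Hn.
set F := fun i (j : 'I_n.+1) => if i == l
  then (INR j / INR n - to_unit m (t i)) ^ 2 * bernstein n j (to_unit m (t i))
  else bernstein n j (to_unit m (t i)).
transitivity (\big[Rplus/0]_(k : multi_index n) \big[Rmult/1]_(i < d) F i (k i)).
  apply: eq_bigr => k _; rewrite /bweight (bigD1 l) // [in RHS](bigD1 l) //.
  have -> : \big[Rmult/1]_(i < d | i != l) F i (k i)
      = \big[Rmult/1]_(i < d | i != l) bernstein n (k i) (to_unit m (t i)).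
    by apply: eq_bigr => i Hi; rewrite /F (negbTE Hi).
  by rewrite {1}/F eqxx /=; symmetry; exact: Rmult_assoc.
rewrite -(bigA_distr_bigA F) (bigD1 l) //=.
have -> : \big[Rmult/1]_(i < d | i != l) \big[Rplus/0]_(j < n.+1) F i j = 1.
  apply: big1 => i Hi.
  by rewrite /F (negbTE Hi) -(sum_bernstein n (to_unit m (t i))) -big_ord_sum_f_R0.
by rewrite Rmult_1_r /F eqxx -(@sum_bernstein_variance n (to_unit m (t l)) Hn) -big_ord_sum_f_R0.
Qed.

Lemma bernstein_op_sq_dev m n t : 0 < m -> in_cube m t -> (2 <= n)%nat ->
  \big[Rplus/0]_(k : multi_index n)
    (\big[Rplus/0]_(l < d) (bgrid m n k l - t l) ^ 2 * bweight m n k t)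
  <= INR d * m ^ 2 / INR n.
Proof.
move=> Hm Ht Hn; have Hn0 : 0 < INR n by apply: lt_0_INR; apply/ltP; exact: ltnW.
under eq_bigr do rewrite big_distrl /=.
rewrite exchange_big /= /Rdiv Rmult_assoc -big_ord_Rconst.
apply: big_Rle => l _.
rewrite (eq_bigr (fun k : multi_index n => 4 * m ^ 2 *
    ((INR (k l) / INR n - to_unit m (t l)) ^ 2 * bweight m n k t))); last first.
  by move=> k _; rewrite /bgrid /to_unit; field; lra.
rewrite -big_distrr /= sum_bweight_sq_dev //.
have [X0 X1] := to_unit_01 Hm (Ht l).
have : to_unit m (t l) * (1 - to_unit m (t l)) <= / 4.
  by have := pow2_ge_0 (to_unit m (t l) - / 2); nra.
move=> Hquarter; have Hmn : 0 <= m ^ 2 * / INR n.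
  by apply: Rmult_le_pos; [exact: pow2_ge_0|apply: Rlt_le; apply: Rinv_0_lt_compat].
have := Rmult_le_compat_l _ _ _ Hmn (_ : 4 * (to_unit m (t l) * (1 - to_unit m (t l))) <= 1).
by rewrite /Rdiv /=; lra.
Qed.

Lemma bernstein_op_err {f m n M eps del} : 0 < m -> 0 < eps -> 0 < del ->
  (forall t, in_cube m t -> Rabs (f t) <= M) ->
  (forall x y, in_cube m x -> in_cube m y -> (forall i, Rabs (x i - y i) < del) ->
     Rabs (f x - f y) < eps) ->
  (2 <= n)%nat -> forall t, in_cube m t ->
  Rabs (bernstein_op m n f t - f t) <= eps + 2 * M / del ^ 2 * (INR d * m ^ 2 / INR n).
Proof.
move=> Hm Heps Hdel HM Hu Hn t Ht.
have Hc : 0 <= 2 * M / del ^ 2.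
  have := HM t Ht; have := Rabs_pos (f t); have := pow_lt del 2 Hdel.
  by move=> *; apply: Rmult_le_pos; [lra|apply: Rlt_le; apply: Rinv_0_lt_compat].
have -> : bernstein_op m n f t - f t
    = \big[Rplus/0]_(k : multi_index n) ((f (bgrid m n k) - f t) * bweight m n k t).
  have Hft : f t = \big[Rplus/0]_(k : multi_index n) (f t * bweight m n k t).
    by rewrite -big_distrr /= sum_bweight Rmult_1_r.
  rewrite /bernstein_op [X in _ - X]Hft -big_Rsum_sub.
  by apply: eq_bigr => k _; ring.
have Hterm k : Rabs ((f (bgrid m n k) - f t) * bweight m n k t)
    <= eps * bweight m n k t + 2 * M / del ^ 2 *
       (\big[Rplus/0]_(l < d) (bgrid m n k l - t l) ^ 2 * bweight m n k t).
  rewrite Rabs_mult (Rabs_pos_eq (bweight m n k t)); last exact: bweight_ge0.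
  rewrite -Rmult_assoc -Rmult_plus_distr_r; apply: Rmult_le_compat_r; first exact: bweight_ge0.
  by apply: (quadratic_modulus Heps Hdel HM Hu) => //; apply: bgrid_in_cube => //; exact: ltnW.
apply: Rle_trans (Rabs_big_le _) _; apply: Rle_trans (big_Rle _ _ (fun k _ => Hterm k)) _.
rewrite big_split /= -!big_distrr /= sum_bweight Rmult_1_r.
by apply: Rplus_le_compat_l; apply: Rmult_le_compat_l => //; exact: bernstein_op_sq_dev.
Qed.

End BernsteinOperator.

(** * Uniform approximation on cubes by K_h *)

Section ApproximationByK.
Context {d : nat} (h : vec d -> R).
Implicit Types (f g P Q : vec d -> R) (t w : vec d).

Lemma in_K_scal c f : in_K h f -> in_K h (fun t => c * f t).
Proof.
case=> K [al [om [ga [HK [Hom [Hga Hf]]]]]].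
exists K, (fun k => c * al k), om, ga; do 3 (split => //).
by move=> tau; rewrite Hf -sumR_scal; apply: sumR_ext => i _; ring.
Qed.

Lemma in_K_add f g : in_K h f -> in_K h g -> in_K h (fun t => f t + g t).
Proof.
case=> K1 [a1 [o1 [g1 [HK1 [Ho1 [Hg1 Hf]]]]]].
case=> K2 [a2 [o2 [g2 [HK2 [Ho2 [Hg2 Hg]]]]]].
pose glue (A : Type) (x1 x2 : nat -> A) k := if (k < K1)%nat then x1 k else x2 (k - K1)%nat.
exists (K1 + K2)%nat, (glue _ a1 a2), (glue _ o1 o2), (glue _ g1 g2); rewrite /glue.
split; first by rewrite (leq_trans HK1) // leq_addr.
split; first by move=> k i; case: ifP.
split; first by move=> k i; case: ifP.
move=> tau; rewrite Hf Hg sumR_cat; congr (_ + _); apply: sumR_ext => i Hi.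
  by rewrite Hi.
by rewrite ltnNge leq_addl addnK.
Qed.

Definition K_approx f := forall m eps, 0 < m -> 0 < eps ->
  exists g, in_K h g /\ forall t, in_cube m t -> Rabs (f t - g t) < eps.

Lemma K_approx_add {f g} : K_approx f -> K_approx g -> K_approx (fun t => f t + g t).
Proof.
move=> Hf Hg m e Hm He.
have [f1 [Kf1 H1]] := Hf m (e / 2) Hm ltac:(lra).
have [g1 [Kg1 H2]] := Hg m (e / 2) Hm ltac:(lra).
exists (fun t => f1 t + g1 t); split; first exact: in_K_add.
move=> t Ht; have := H1 t Ht; have := H2 t Ht.
have := Rabs_triang (f t - f1 t) (g t - g1 t).
by rewrite (_ : f t - f1 t + (g t - g1 t) = f t + g t - (f1 t + g1 t)); [lra|ring].
Qed.

Lemma K_approx_scal c {f} : K_approx f -> K_approx (fun t => c * f t).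
Proof.
move=> Hf m e Hm He; have Hc : 0 < Rabs c + 1 by have := Rabs_pos c; lra.
have [f1 [Kf1 H1]] := Hf m (e / (Rabs c + 1)) Hm ltac:(apply: Rdiv_lt_0_compat; lra).
exists (fun t => c * f1 t); split; first exact: in_K_scal.
move=> t Ht; have := H1 t Ht => Hclose.
rewrite (_ : c * f t - c * f1 t = c * (f t - f1 t)); last ring.
rewrite Rabs_mult; apply: Rle_lt_trans (_ : _ <= (Rabs c + 1) * Rabs (f t - f1 t)) _.
  by apply: Rmult_le_compat_r; [exact: Rabs_pos|lra].
rewrite Rmult_comm; apply: Rlt_le_trans (Rmult_lt_compat_r _ _ _ Hc Hclose) _.
by right; field; lra.
Qed.

Lemma K_approx_closed f :
  (forall m eps, 0 < m -> 0 < eps ->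
     exists g, K_approx g /\ forall t, in_cube m t -> Rabs (f t - g t) < eps) ->
  K_approx f.
Proof.
move=> H m e Hm He.
have [g [Hg H1]] := H m (e / 2) Hm ltac:(lra).
have [g1 [Kg1 H2]] := Hg m (e / 2) Hm ltac:(lra).
exists g1; split => // t Ht; have := H1 t Ht; have := H2 t Ht.
have := Rabs_triang (f t - g t) (g t - g1 t).
by rewrite (_ : f t - g t + (g t - g1 t) = f t - g1 t); [lra|ring].
Qed.

(* A single term with a small scale [c] suffices: [h (c tau) / h 0 -> 1] uniformly
   on cubes as [c -> 0], by continuity of [h] at [0]. *)
Lemma K_approx_cos {w} : cont_Rd h -> 0 < h (fun _ => 0) -> (forall i, 0 <= w i) ->
  K_approx (fun t => cos (dot w t)).
Proof.
move=> Hc Hh0 Hw m eps Hm He; set h0 := h (fun _ => 0) in Hh0 *.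
have [del [Hdel Hc0]] := Hc (fun _ => 0) (eps * h0) (Rmult_lt_0_compat _ _ He Hh0).
set c := del / (2 * m); have Hcp : 0 < c by apply: Rdiv_lt_0_compat; lra.
have HPI := PI_RGT_0.
exists (fun t => sumR 1 (fun k => / h0 * h (hadamard t (fun _ => c))
        * cos (2 * PI * dot (fun i => / (2 * PI) * w i) t))); split.
  exists 1%nat, (fun _ => / h0), (fun _ i => / (2 * PI) * w i), (fun _ _ => c).
  split => //; split; last by split.
  by move=> k i; apply: Rmult_le_pos => //; apply: Rlt_le; apply: Rinv_0_lt_compat; lra.
move=> t Ht; rewrite sumR1 dot_scal.
rewrite (_ : 2 * PI * (/ (2 * PI) * dot w t) = dot w t); last by field; lra.
set y := hadamard t (fun _ => c).
have Hy : Rabs (h y - h0) < eps * h0.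
  apply: Hc0 => i; rewrite /y /hadamard Rminus_0_r Rabs_mult (Rabs_pos_eq c); last lra.
  apply: Rle_lt_trans (_ : _ <= m * c) _; first by apply: Rmult_le_compat_r; [lra|exact: Ht].
  by rewrite /c (_ : m * (del / (2 * m)) = del / 2); [lra|field; lra].
rewrite (_ : cos (dot w t) - / h0 * h y * cos (dot w t)
           = cos (dot w t) * ((h0 - h y) / h0)); last by field; lra.
rewrite Rabs_mult /Rdiv Rabs_mult Rabs_inv (Rabs_pos_eq h0); last lra.
rewrite -Rabs_Ropp Ropp_minus_distr in Hy.
have Hcos : Rabs (cos (dot w t)) <= 1 by apply: Rabs_le; apply: COS_bound.
have Hrel : Rabs (h0 - h y) * / h0 < eps.
  by apply: (Rmult_lt_reg_r h0) => //; rewrite Rmult_assoc Rinv_l; lra.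
apply: Rle_lt_trans Hrel; rewrite -[X in _ <= X]Rmult_1_l.
apply: Rmult_le_compat_r => //; apply: Rmult_le_pos; first exact: Rabs_pos.
by apply: Rlt_le; apply: Rinv_0_lt_compat.
Qed.

Definition cos_modulable P :=
  (forall m, 0 < m -> exists B, forall t, in_cube m t -> Rabs (P t) <= B) /\
  forall w, (forall i, 0 <= w i) -> K_approx (fun t => P t * cos (dot w t)).

Lemma cos_modulable_ext {P Q} : (forall t, P t = Q t) -> cos_modulable P -> cos_modulable Q.
Proof. by move=> /functional_extensionality ->. Qed.

Lemma cos_modulable_add {P Q} :
  cos_modulable P -> cos_modulable Q -> cos_modulable (fun t => P t + Q t).
Proof.
move=> [BP AP] [BQ AQ]; split.
  move=> m Hm; have [B1 H1] := BP m Hm; have [B2 H2] := BQ m Hm.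
  exists (B1 + B2) => t Ht; have := H1 t Ht; have := H2 t Ht.
  by have := Rabs_triang (P t) (Q t); lra.
move=> w Hw; have := K_approx_add (AP w Hw) (AQ w Hw).
by congr K_approx; apply: functional_extensionality => t; ring.
Qed.

Lemma cos_modulable_scal c {P} : cos_modulable P -> cos_modulable (fun t => c * P t).
Proof.
move=> [BP AP]; split.
  move=> m Hm; have [B1 H1] := BP m Hm; exists (Rabs c * B1) => t Ht.
  by rewrite Rabs_mult; apply: Rmult_le_compat_l; [exact: Rabs_pos|exact: H1].
move=> w Hw; have := K_approx_scal c (AP w Hw).
by congr K_approx; apply: functional_extensionality => t; ring.
Qed.

Lemma cos_modulable_one : cont_Rd h -> 0 < h (fun _ => 0) -> cos_modulable (fun _ => 1).
Proof.
move=> Hc Hh0; split.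
  by move=> m Hm; exists 1 => t _; rewrite Rabs_R1; lra.
move=> w Hw; have := K_approx_cos Hc Hh0 Hw.
by congr K_approx; apply: functional_extensionality => t; ring.
Qed.

Lemma in_cube0 {m} : 0 <= m -> in_cube m (fun _ : 'I_d => 0).
Proof. by move=> Hm i; rewrite Rabs_R0. Qed.

(* Second differences in the frequency [w] along [e] turn [cos (w . t)] into
   [- (e . t) ^ 2 cos (w . t)]. *)
Lemma cos_modulable_mul_sq {P e} : (forall i, 0 <= e i) ->
  cos_modulable P -> cos_modulable (fun t => P t * dot e t ^ 2).
Proof.
move=> He [BP AP].
have Hdot m t : 0 < m -> in_cube m t ->
    Rabs (dot e t) <= m * \big[Rplus/0]_(i < d) Rabs (e i).
  by move=> Hm; apply: Rabs_dot_le; lra.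
have HX m : 0 < m -> 0 <= m * \big[Rplus/0]_(i < d) Rabs (e i).
  by move=> Hm; apply: Rmult_le_pos; [lra|apply: big_Rsum_ge0 => i _; exact: Rabs_pos].
split.
  move=> m Hm; have [B HB] := BP m Hm.
  exists (B * (m * \big[Rplus/0]_(i < d) Rabs (e i)) ^ 2) => t Ht.
  rewrite Rabs_mult -RPow_abs; apply: Rmult_le_compat; try exact: Rabs_pos; auto.
    exact: pow_le (Rabs_pos _).
  by apply: pow_incr; split; [exact: Rabs_pos|exact: Hdot].
move=> w Hw; apply: K_approx_closed => m eps Hm Heps.
have [B HB] := BP m Hm.
have HB0 : 0 <= B by exact: Rle_trans (Rabs_pos _) (HB _ (in_cube0 (Rlt_le _ _ Hm))).
set X := m * \big[Rplus/0]_(i < d) Rabs (e i).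
have [s [Hs Herr]] := small_step HB0 (HX m Hm) Heps.
have Hws k : 0 <= k -> forall i, 0 <= w i + k * e i.
  by move=> Hk i; have := Hw i; have := He i; nra.
exists (fun t => - / s ^ 2 *
  (P t * cos (dot (fun i => w i + 2 * s * e i) t)
   + -2 * (P t * cos (dot (fun i => w i + s * e i) t)) + P t * cos (dot w t))); split.
  apply: K_approx_scal; apply: K_approx_add; last exact: AP.
  apply: K_approx_add; first by apply: AP; apply: Hws; lra.
  by apply: K_approx_scal; apply: AP; apply: Hws; lra.
move=> t Ht; rewrite !dot_lin; apply: Rle_lt_trans Herr.
apply: Rle_trans (scaled_cos_second_difference _ _ _ _ Hs) _.
have Hv := Hdot m t Hm Ht; have Hp := HB t Ht; have := Rabs_pos (dot e t).
move=> Hv0; apply: Rmult_le_compat; try apply: Rmult_le_pos; try exact: Rabs_pos; try lra.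
  by have := pow_le _ 3 Hv0; have := pow_le _ 4 Hv0; nra.
  by apply: Rmult_le_compat_r; lra.
apply: Rplus_le_compat; first by apply: pow_incr.
by apply: Rmult_le_compat_l; [lra|apply: pow_incr].
Qed.

Lemma cos_modulable_mul_coord2 {P} i j :
  cos_modulable P -> cos_modulable (fun t => P t * (t i * t j)).
Proof.
move=> HP.
have Hij l : 0 <= unit_vec i l + 1 * unit_vec j l.
  by have := unit_vec_ge0 i l; have := unit_vec_ge0 j l; lra.
have Hsum := cos_modulable_scal (/ 2) (cos_modulable_mul_sq Hij HP).
have Hi := cos_modulable_scal (- / 2) (cos_modulable_mul_sq (unit_vec_ge0 i) HP).
have Hj := cos_modulable_scal (- / 2) (cos_modulable_mul_sq (unit_vec_ge0 j) HP).
apply: cos_modulable_ext (cos_modulable_add (cos_modulable_add Hsum Hi) Hj) => t /=.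
by rewrite dot_lin !dot_unit_vec; field.
Qed.

Definition even_part P t := (P t + P (vopp t)) / 2.
Definition odd_part P t := (P t - P (vopp t)) / 2.

(* Multiplication by [t i] swaps even and odd parts; carrying the extra factor
   [t j] on the odd part makes the class stable under this multiplication, via
   [cos_modulable_mul_coord2] applied to the even part. *)
Definition parity_modulable P :=
  cos_modulable (even_part P) /\ forall j, cos_modulable (fun t => t j * odd_part P t).

Hypotheses (Hcont : cont_Rd h) (Hh0 : 0 < h (fun _ => 0)).

Lemma parity_modulable_const c : parity_modulable (fun _ => c).
Proof.
have H1 := cos_modulable_one Hcont Hh0; split.
  by apply: cos_modulable_ext (cos_modulable_scal c H1) => t; rewrite /even_part; field.
by move=> j; apply: cos_modulable_ext (cos_modulable_scal 0 H1) => t; rewrite /odd_part; field.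
Qed.

Lemma parity_modulable_add {P Q} :
  parity_modulable P -> parity_modulable Q -> parity_modulable (fun t => P t + Q t).
Proof.
move=> [P1 P2] [Q1 Q2]; split.
  by apply: cos_modulable_ext (cos_modulable_add P1 Q1) => t; rewrite /even_part; field.
move=> j; apply: cos_modulable_ext (cos_modulable_add (P2 j) (Q2 j)) => t.
by rewrite /odd_part; field.
Qed.

Lemma parity_modulable_scal c {P} : parity_modulable P -> parity_modulable (fun t => c * P t).
Proof.
move=> [P1 P2]; split.
  by apply: cos_modulable_ext (cos_modulable_scal c P1) => t; rewrite /even_part; field.
move=> j; apply: cos_modulable_ext (cos_modulable_scal c (P2 j)) => t.
by rewrite /odd_part; field.
Qed.

Lemma parity_modulable_mul_coord {P} i :
  parity_modulable P -> parity_modulable (fun t => P t * t i).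
Proof.
move=> [P1 P2]; split.
  by apply: cos_modulable_ext (P2 i) => t; rewrite /even_part /odd_part /vopp; field.
move=> j; apply: cos_modulable_ext (cos_modulable_mul_coord2 i j P1) => t.
by rewrite /even_part /odd_part /vopp; field.
Qed.

Lemma parity_modulable_mul_affine_pow {P} i a b n :
  parity_modulable P -> parity_modulable (fun t => P t * (a * t i + b) ^ n).
Proof.
move=> HP; elim: n => [|n IH].
  by congr parity_modulable: HP; apply: functional_extensionality => t; ring.
have := parity_modulable_add (parity_modulable_scal a (parity_modulable_mul_coord i IH))
  (parity_modulable_scal b IH).
by congr parity_modulable; apply: functional_extensionality => t /=; ring.
Qed.

Lemma parity_modulable_bernstein_op m n f : parity_modulable (bernstein_op m n f).
Proof.
have Hunit s : to_unit m s = / (2 * m) * s + m * / (2 * m) by rewrite /to_unit /Rdiv; ring.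
have Hunit' s : 1 - to_unit m s = - / (2 * m) * s + (1 - m * / (2 * m)) by rewrite Hunit; ring.
have Hprod (k : {ffun 'I_d -> 'I_n.+1}) (r : seq 'I_d) :
    parity_modulable (fun t => \big[Rmult/1]_(i <- r) bernstein n (k i) (to_unit m (t i))).
  elim: r => [|i r IH].
    by have := parity_modulable_const 1; congr parity_modulable;
       apply: functional_extensionality => t; rewrite big_nil.
  have := parity_modulable_scal (C n (k i))
    (parity_modulable_mul_affine_pow i (- / (2 * m)) (1 - m * / (2 * m)) (n - k i)
      (parity_modulable_mul_affine_pow i (/ (2 * m)) (m * / (2 * m)) (k i) IH)).
  congr parity_modulable; apply: functional_extensionality => t.
  by rewrite big_cons /bernstein Hunit' Hunit /=; ring.
rewrite /bernstein_op; elim: (index_enum _) => [|k r IH].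
  by have := parity_modulable_const 0; congr parity_modulable;
     apply: functional_extensionality => t; rewrite big_nil.
have := parity_modulable_add (parity_modulable_scal (f (bgrid m n k)) (Hprod k (index_enum _))) IH.
by congr parity_modulable; apply: functional_extensionality => t; rewrite big_cons.
Qed.

Lemma K_approx_even_part {P} : parity_modulable P -> K_approx (even_part P).
Proof.
move=> [[_ HP] _]; have := HP (fun _ => 0) (fun _ => Rle_refl 0).
by congr K_approx; apply: functional_extensionality => t; rewrite dot0 cos_0; ring.
Qed.

End ApproximationByK.

(** * Compactness of cubes *)

Lemma exists_nat_gt r : exists N : nat, r < INR N.
Proof.
have Hp : 0 < / (Rabs r + 1) by apply: Rinv_0_lt_compat; have := Rabs_pos r; lra.
have [N [HN HN0]] := archimed_cor1 _ Hp; exists N.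
have HN0' : 0 < INR N by apply: lt_0_INR; lia.
case: (Rle_dec (INR N) (Rabs r + 1)) => [Hle|]; last by have := Rle_abs r; lra.
by have := Rinv_le_contravar _ _ HN0' Hle; have := Rle_abs r; lra.
Qed.

Lemma eventually_inv_lt {eps} : 0 < eps ->
  exists N : nat, forall n, (N <= n)%nat -> / INR n.+1 < eps.
Proof.
move=> He; have [N [HN HN0]] := archimed_cor1 _ He; exists N => n Hn.
have HN0' : 0 < INR N by apply: lt_0_INR; lia.
have := Rinv_le_contravar _ _ HN0' (le_INR N n.+1 ltac:(lia)); lra.
Qed.

Definition strictly_increasing (p : nat -> nat) := forall n, (p n < p n.+1)%nat.

Lemma strictly_increasing_ge {p} : strictly_increasing p -> forall n, (n <= p n)%nat.
Proof. by move=> Hp; elim=> [|n IH] //; have := Hp n; lia. Qed.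

Lemma strictly_increasing_comp {p q} :
  strictly_increasing p -> strictly_increasing q -> strictly_increasing (fun n => p (q n)).
Proof. by move=> Hp Hq n; apply: (homo_ltn ltn_trans Hp); exact: Hq. Qed.

Lemma Un_cv_subseq {u l p} : strictly_increasing p -> Un_cv u l -> Un_cv (fun n => u (p n)) l.
Proof.
move=> Hp Hu eps He; have [N HN] := Hu eps He.
by exists N => n Hn; apply: HN; have := strictly_increasing_ge Hp n; lia.
Qed.

Lemma bounded_subseq_cv {u : nat -> R} {m} : (forall n, Rabs (u n) <= m) ->
  exists p, strictly_increasing p /\ exists l, Un_cv (fun n => u (p n)) l.
Proof.
move=> Hb.
have [l Hl] := Bolzano_Weierstrass u (fun c => - m <= c <= m) (compact_P3 _ _)
  (fun n => Rabs_le_bounds (Hb n)).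
have Hnear (j N : nat) : exists q : nat, (N <= q)%nat /\ Rabs (u q - l) < / INR j.+1.
  have Hj : 0 < / INR j.+1 by apply: Rinv_0_lt_compat; apply: lt_0_INR; lia.
  have [q [Hq Hq2]] := Hl (disc l (mkposreal _ Hj)) N
    (ex_intro _ (mkposreal _ Hj) (fun y Hy => Hy)).
  by exists q; split => //; apply/leP.
have [g Hg] := choice (fun jN q => (jN.2 <= q)%nat /\ Rabs (u q - l) < / INR jN.1.+1)
  (fun jN => Hnear jN.1 jN.2).
pose p := fix p n := if n is n'.+1 then g (n, (p n').+1) else g (0%nat, 0%nat).
exists p; split; first by move=> n /=; have := (Hg (n.+1, (p n).+1)).1 => /=; lia.
exists l => eps He; have [N HN] := eventually_inv_lt He.
exists N => n Hn; rewrite /R_dist.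
have : Rabs (u (p n) - l) < / INR n.+1 by case: n Hn => [|n] _; [exact: (Hg _).2|exact: (Hg _).2].
by have := HN n (introT leP Hn); lra.
Qed.

Section CubeCompactness.
Context {d : nat}.
Implicit Types (f : vec d -> R).

Lemma cube_subseq_cv {x : nat -> vec d} {m} : (forall n, in_cube m (x n)) ->
  exists p, strictly_increasing p /\
    exists l : vec d, forall i, Un_cv (fun n => x (p n) i) (l i).
Proof.
move=> Hx.
suff [p [Hp Hcv]] : exists p, strictly_increasing p /\
    forall i : 'I_d, exists li, Un_cv (fun n => x (p n) i) li.
  by have [l Hl] := fin_all_exists Hcv; exists p; split => //; exists l.
suff : forall j : nat, exists p, strictly_increasing p /\
    forall i : 'I_d, (i < j)%nat -> exists li, Un_cv (fun n => x (p n) i) li.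
  by move=> /(_ d) [p [Hp Hcv]]; exists p; split => // i; apply: Hcv.
elim=> [|j [p [Hp Hcv]]]; first by exists (fun n => n); split => [n|i] //; rewrite ltn0.
case: (ltnP j d) => Hj; last by exists p; split => // i Hi; apply: Hcv; have := ltn_ord i; lia.
have [q [Hq [lj Hlj]]] := bounded_subseq_cv (fun n => Hx (p n) (Ordinal Hj)).
exists (fun n => p (q n)); split; first exact: strictly_increasing_comp.
move=> i; rewrite ltnS leq_eqVlt => /orP [/eqP Ei|Hi].
  by exists lj; have -> : i = Ordinal Hj by apply: val_inj.
by have [li Hli] := Hcv i Hi; exists li; exact: (Un_cv_subseq Hq Hli).
Qed.

Lemma eventually_coords_close {x : nat -> vec d} {l : vec d} : (forall i, Un_cv (fun n => x n i) (l i)) ->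
  forall {del}, 0 < del ->
  exists N, forall n, (N <= n)%nat -> forall i, Rabs (x n i - l i) < del.
Proof.
move=> Hcv del Hdel.
have [N HN] := fin_all_exists (fun i => Hcv i del Hdel).
exists (\max_i N i) => n Hn i; apply: HN.
by have := @leq_bigmax _ N i; rewrite /ge; lia.
Qed.

Lemma cube_unif_cont {f} m {eps} : cont_Rd f -> 0 < eps ->
  exists del, 0 < del /\ forall x y, in_cube m x -> in_cube m y ->
    (forall i, Rabs (x i - y i) < del) -> Rabs (f x - f y) < eps.
Proof.
move=> Hf He; apply: NNPP => Hnot.
have Hbad (n : nat) : exists xy : vec d * vec d, in_cube m xy.1 /\ in_cube m xy.2 /\
    (forall i, Rabs (xy.1 i - xy.2 i) < / INR n.+1) /\ eps <= Rabs (f xy.1 - f xy.2).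
  apply: NNPP => Hn; apply: Hnot; exists (/ INR n.+1).
  split; first by apply: Rinv_0_lt_compat; apply: lt_0_INR; lia.
  move=> x y Hx Hy Hxy; apply: Rnot_le_lt => Hle; apply: Hn; by exists (x, y).
have [X HX] := choice _ Hbad.
have [p [Hp [l Hl]]] := cube_subseq_cv (fun n => (HX n).1).
have [del [Hdel Hcont]] := Hf l (eps / 2) ltac:(lra).
have [N1 HN1] := eventually_coords_close Hl (ltac:(lra) : 0 < del / 2).
have [N2 HN2] := eventually_inv_lt (ltac:(lra) : 0 < del / 2).
set n := maxn N1 N2; have [_ [_ [Hclose Hfar]]] := HX (p n).
have Hx1 i : Rabs ((X (p n)).1 i - l i) < del by have := HN1 n (leq_maxl _ _) i; lra.
have Hx2 i : Rabs ((X (p n)).2 i - l i) < del.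
  have := HN1 n (leq_maxl _ _) i; have := Hclose i.
  have := HN2 (p n) (leq_trans (leq_maxr _ _) (strictly_increasing_ge Hp n)).
  have := Rabs_triang ((X (p n)).2 i - (X (p n)).1 i) ((X (p n)).1 i - l i).
  rewrite -(Rabs_Ropp ((X (p n)).2 i - _)) Ropp_minus_distr.
  by rewrite (_ : _ - _ + (_ - l i) = (X (p n)).2 i - l i); [lra|ring].
have := Hcont _ Hx1; have := Hcont _ Hx2.
have := Rabs_triang (f (X (p n)).1 - f l) (f l - f (X (p n)).2).
rewrite -(Rabs_Ropp (f l - _)) Ropp_minus_distr.
by rewrite (_ : _ - f l + (f l - _) = f (X (p n)).1 - f (X (p n)).2); [lra|ring].
Qed.

Lemma cube_bounded {f} m : cont_Rd f -> exists M, forall t, in_cube m t -> Rabs (f t) <= M.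
Proof.
move=> Hf; apply: NNPP => Hnot.
have Hbig (n : nat) : exists t : vec d, in_cube m t /\ INR n < Rabs (f t).
  apply: NNPP => Hn; apply: Hnot; exists (INR n) => t Ht.
  by apply: Rnot_lt_le => Hlt; apply: Hn; exists t.
have [X HX] := choice _ Hbig.
have [p [Hp [l Hl]]] := cube_subseq_cv (fun n => (HX n).1).
have [del [Hdel Hcont]] := Hf l 1 ltac:(lra).
have [N1 HN1] := eventually_coords_close Hl Hdel.
have [N2 HN2] := exists_nat_gt (Rabs (f l) + 1).
set n := maxn N1 N2.
have := Hcont _ (HN1 n (leq_maxl _ _)); have := (HX (p n)).2.
have : INR N2 <= INR (p n).
  by apply: le_INR; have := strictly_increasing_ge Hp n; have := leq_maxr N1 N2; lia.
by have := Rabs_triang_inv (f (X (p n))) (f l); lra.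
Qed.

End CubeCompactness.

Lemma bernstein_op_approx {d} {f : vec d -> R} m {eps} : cont_Rd f -> 0 < m -> 0 < eps ->
  exists n, forall t, in_cube m t -> Rabs (bernstein_op m n f t - f t) < eps.
Proof.
move=> Hf Hm He.
have [M HM] := cube_bounded m Hf.
have [del [Hdel Hu]] := cube_unif_cont m Hf (ltac:(lra) : 0 < eps / 2).
set Z := 2 * M / del ^ 2 * (INR d * m ^ 2).
have [N HN] := exists_nat_gt (2 * Z / eps).
have Hn0 : 0 < INR (N + 2) by apply: lt_0_INR; lia.
have HNn : INR N <= INR (N + 2) by apply: le_INR; lia.
have HZ : Z / INR (N + 2) < eps / 2.
  apply: (Rmult_lt_reg_r (INR (N + 2))) => //; rewrite /Rdiv Rmult_assoc Rinv_l; last lra.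
  have : 2 * Z / eps * eps < INR (N + 2) * eps by apply: Rmult_lt_compat_r; lra.
  by rewrite /Rdiv Rmult_assoc Rinv_l; lra.
exists (N + 2)%nat => t Ht.
have Hn2 : (2 <= N + 2)%nat by rewrite addn2.
apply: Rle_lt_trans (bernstein_op_err Hm (ltac:(lra) : 0 < eps / 2) Hdel HM Hu Hn2 t Ht) _.
rewrite (_ : 2 * M / del ^ 2 * (INR d * m ^ 2 / INR (N + 2)) = Z / INR (N + 2)); first lra.
by rewrite /Z; field; split; lra.
Qed.

Lemma K_approx_even {d} {h k : vec d -> R} : cont_Rd h -> 0 < h (fun _ => 0) ->
  cont_Rd k -> (forall t, k (vopp t) = k t) -> K_approx h k.
Proof.
move=> Hh Hh0 Hk Hev; apply: K_approx_closed => m eps Hm He.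
have [n Hn] := bernstein_op_approx m Hk Hm He.
exists (even_part (bernstein_op m n k)); split.
  exact: K_approx_even_part (parity_modulable_bernstein_op h Hh Hh0 m n k).
move=> t Ht; have Hmt : in_cube m (vopp t) by move=> i; rewrite /vopp Rabs_Ropp.
have := Hn t Ht; have := Hn _ Hmt; rewrite /even_part Hev.
have := Rabs_triang (bernstein_op m n k t - k t)
                    (bernstein_op m n k (vopp t) - k t).
rewrite -(Rabs_Ropp (k t - _)).
rewrite (_ : - (k t - (bernstein_op m n k t + bernstein_op m n k (vopp t)) / 2)
  = (bernstein_op m n k t - k t + (bernstein_op m n k (vopp t) - k t)) / 2); last field.
rewrite /Rdiv Rabs_mult (Rabs_pos_eq (/ 2)); lra.
Qed.

Lemma K_approx_pointwise_cv {d} {h k : vec d -> R} : K_approx h k ->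
  exists kn : nat -> vec d -> R,
    (forall n, in_K h (kn n)) /\ forall tau, Un_cv (fun n => kn n tau) (k tau).
Proof.
move=> Hk.
have Hstage (n : nat) : exists g, in_K h g /\
    forall t, in_cube (INR n + 1) t -> Rabs (k t - g t) < / INR n.+1.
  apply: Hk; first by have := pos_INR n; lra.
  by apply: Rinv_0_lt_compat; apply: lt_0_INR; lia.
have [kn Hkn] := choice _ Hstage.
exists kn; split => [n|tau eps He]; first exact: (Hkn n).1.
have [N0 HN0] := exists_nat_gt (\big[Rplus/0]_(i < d) Rabs (tau i)).
have [N1 HN1] := eventually_inv_lt He.
exists (maxn N0 N1) => n Hn; rewrite /R_dist.
have Hin : in_cube (INR n + 1) tau.
  move=> i; have : Rabs (tau i) <= \big[Rplus/0]_(j < d) Rabs (tau j).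
    by apply: (@Rle_big_term _ (fun j => Rabs (tau j))) => j; exact: Rabs_pos.
  have : INR N0 <= INR n by apply: le_INR; have := leq_maxl N0 N1; lia.
  lra.
have := (Hkn n).2 tau Hin; have := HN1 n ltac:(have := leq_maxr N0 N1; lia).
by rewrite -Rabs_Ropp Ropp_minus_distr; lra.
Qed.

Theorem theorem3 (d : nat) (Hd : (1 <= d)%nat) (h : vec d -> R)
  (Hcont : cont_Rd h) (Hint : integrable_Rd h) (Hpsd : psd_fun h)
  (Hpos : forall tau, 0 < h tau) :
  forall k : vec d -> R, cont_Rd k -> psd_fun k ->
  exists kn : nat -> vec d -> R,
    (forall n, in_K h (kn n)) /\
    (forall tau, Un_cv (fun n => kn n tau) (k tau)).
Proof.
move=> k Hk [Hev _].
exact: K_approx_pointwise_cv (K_approx_even Hcont (Hpos _) Hk Hev).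
Qed.
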